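(* For every integer $k\ge 2$, the complete graph $K_{2k}$ has a quasi-majority neighbor sum distinguishing $3$-edge-coloring in which at least $k-1$ vertices are each incident to at most $k-1$ edges of color $2$.
   Context: A $3$-edge-coloring of $G$ is any map $c:E(G)\to\{1,2,3\}$ (adjacent edges may share colors). It induces $\sigma_c(v)=\sum_{u\in N(v)}c(vu)$. The coloring is neighbor sum distinguishing if $\sigma_c(u)\ne\sigma_c(v)$ for every edge $uv$, and quasi-majority if every vertex $v$ is incident to at most $\lceil d(v)/2\rceil$ edges of each single color. *)

From mathcomp Require Import all_boot.
Set Implicit Arguments. Unset Strict Implicit. Unset Printing Implicit Defensive.

(* The complete graph K_n on vertex set 'I_n: every pair u <> v is an edge.
   A 3-edge-colouring is represented by a symmetric function c on ordered
   pairs of distinct vertices, with c u v = c v u in {1,2,3}; c u u is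
   irrelevant (loops are not edges). *)
Definition edge_coloring3 (n : nat) (c : 'I_n -> 'I_n -> nat) : Prop :=
  forall u v : 'I_n, u != v -> c u v = c v u /\ 1 <= c u v <= 3.

Definition sigma (n : nat) (c : 'I_n -> 'I_n -> nat) (v : 'I_n) : nat :=
  \sum_(u : 'I_n | u != v) c v u.

Definition col_deg (n : nat) (c : 'I_n -> 'I_n -> nat) (v : 'I_n) (i : nat) : nat :=
  #|[set u : 'I_n | (u != v) && (c v u == i)]|.

Definition degK (n : nat) : nat := n.-1.

Definition nsd (n : nat) (c : 'I_n -> 'I_n -> nat) : Prop :=
  forall u v : 'I_n, u != v -> sigma c u <> sigma c v.

Definition quasi_majority (n : nat) (c : 'I_n -> 'I_n -> nat) : Prop :=
  forall (v : 'I_n) (i : nat), col_deg c v i <= uphalf (degK n).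

From mathcomp Require Import all_boot zify.
Set Implicit Arguments. Unset Strict Implicit. Unset Printing Implicit Defensive.

(* Vertices 2q and 2q+1 form the q-th pair. Start from a colouring of K_4 with
   vertex sums 5, 7, 4, 6 and obtain K_(2L+2) from K_(2L) by adding the pair
   x = 2L, y = 2L+1, with xy coloured 2 and every old vertex joined to x, y by
   colours 2, 2 or by colours 1, 3; all old sums then grow by exactly 4. Exactly
   L - 1 old vertices take 2, 2, which puts sigma(x) = 3L+1 below and
   sigma(y) = 5L+3 above all old sums, so the sums stay pairwise distinct. The
   2, 2 vertices are taken among those v for which L - v/2 is odd; this keeps at
   most L - [L - v/2 odd] edges of colour 2 at v, so in K_(2k) the 2 * ceil(k/2)
   vertices with k - v/2 odd have at most k - 1 edges of colour 2. *)

Lemma sum_nat_double_succ (F : nat -> nat) n :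
  \sum_(0 <= u < n.+1.*2) F u = \sum_(0 <= u < n.*2) F u + F n.*2 + F n.*2.+1.
Proof. by rewrite doubleS !big_nat_recr //= addnA. Qed.

Lemma sum_nat_half (F : nat -> nat) n :
  \sum_(0 <= u < n.*2) F u./2 = 2 * \sum_(0 <= q < n) F q.
Proof.
elim: n => [|n IHn]; first by rewrite !big_geq.
rewrite sum_nat_double_succ big_nat_recr //= IHn.
by rewrite doubleK uphalf_double; lia.
Qed.

Lemma sum_odd_subn n : \sum_(0 <= q < n) odd (n - q) = uphalf n.
Proof.
elim: n => [|n IHn]; first by rewrite big_geq.
rewrite big_nat_recl // subn0 (eq_big_nat _ _ (F2 := fun q => odd (n - q) : nat)).
  by rewrite IHn !uphalfE; lia.
by move=> q _; rewrite subSS.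
Qed.

Lemma col_deg0 n (c : 'I_n -> 'I_n -> nat) v :
  edge_coloring3 c -> col_deg c v 0 = 0.
Proof.
move=> c_col; apply/eqP; rewrite cards_eq0; apply/eqP/setP => u; rewrite !inE.
apply/negP => /andP[uv /eqP cvu0].
by rewrite eq_sym in uv; have [_] := c_col v u uv; rewrite cvu0.
Qed.

(* All v with L - v/2 odd except 2L-2, and except also 2L-1 when L is odd:
   exactly L - 1 vertices. *)
Definition new_edges2 (L v : nat) : bool :=
  if v./2 == L.-1 then odd v && ~~ odd L else odd (L - v./2).

Lemma sum_new_edges2 L : 0 < L -> \sum_(0 <= u < L.*2) new_edges2 L u = L.-1.
Proof.
case: L => // n _; rewrite sum_nat_double_succ.
rewrite (eq_big_nat _ _ (F2 := fun u => odd (n.+1 - u./2) : nat)); last first.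
  by move=> u /andP[_ un]; rewrite /new_edges2 ifN // neq_ltn ltn_half_double un.
have odd_sum : \sum_(0 <= q < n) odd (n.+1 - q) = (uphalf n.+1).-1.
  by move: (sum_odd_subn n.+1); rewrite big_nat_recr //= subSnn; lia.
rewrite (sum_nat_half (fun q => odd (n.+1 - q) : nat)) odd_sum /new_edges2.
by rewrite doubleK odd_double (_ : n.*2.+1./2 = n) ?eqxx /=; lia.
Qed.

Lemma sum_not_new_edges2 L : 0 < L -> \sum_(0 <= u < L.*2) ~~ new_edges2 L u = L.+1.
Proof.
move=> L_gt0; have : \sum_(0 <= u < L.*2) (new_edges2 L u + ~~ new_edges2 L u) = L.*2.
  rewrite (eq_big_nat _ _ (F2 := fun=> 1)) ?sum_nat_const_nat ?muln1 ?subn0 //.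
  by move=> u _; case: new_edges2.
by rewrite big_split /= sum_new_edges2 //; lia.
Qed.

Definition base_col (u v : nat) : nat :=
  match u, v with
  | 0, 1 | 0, 3 | 1, 2 => 2
  | 1, 3 => 3
  | _, _ => 1
  end.

Definition step_col (u v : nat) : nat :=
  if (u./2 == v./2) || new_edges2 v./2 u then 2 else if odd v then 3 else 1.

(* The edge uv with u < v and v >= 4 is coloured by step_col when the pair of v
   is added; col v v = 0 lets vertex sums range over all vertices. *)
Definition col (u v : nat) : nat :=
  if u == v then 0
  else if maxn u v < 4 then base_col (minn u v) (maxn u v)
  else step_col (minn u v) (maxn u v).

Lemma colC u v : col u v = col v u.
Proof. by rewrite /col eq_sym minnC maxnC. Qed.

Lemma col_diag v : col v v = 0.
Proof. by rewrite /col eqxx. Qed.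

Lemma col_range u v : u != v -> 1 <= col u v <= 3.
Proof.
rewrite /col => /negbTE ->; case: ifP => _.
  by case: (minn u v) => [|[|[|m]]]; case: (maxn u v) => [|[|[|[|w]]]].
by rewrite /step_col; case: ifP => //; case: ifP.
Qed.

Definition col_sum (L v : nat) : nat := \sum_(0 <= u < L.*2) col v u.

Definition col_count (L v i : nat) : nat := \sum_(0 <= u < L.*2) (col v u == i).

Section AddPair.

Variable L : nat.
Hypothesis L_gt1 : 1 < L.
Let L_gt0 : 0 < L := ltnW L_gt1.

Lemma col_new_even v : v < L.*2 -> col v L.*2 = if new_edges2 L v then 2 else 1.
Proof.
move=> vL; rewrite /col ltn_eqF // (minn_idPl (ltnW vL)) (maxn_idPr (ltnW vL)).
rewrite ltnNge (_ : 4 <= L.*2) /=; last by lia.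
by rewrite /step_col doubleK odd_double ltn_eqF ?ltn_half_double //=; case: new_edges2.
Qed.

Lemma col_new_odd v : v < L.*2 -> col v L.*2.+1 = if new_edges2 L v then 2 else 3.
Proof.
move=> vL; have vL' : v < L.*2.+1 by lia.
rewrite /col ltn_eqF // (minn_idPl (ltnW vL')) (maxn_idPr (ltnW vL')).
rewrite ltnNge (_ : 4 <= L.*2.+1) /=; last by lia.
rewrite /step_col (_ : L.*2.+1./2 = L); last by lia.
by rewrite /= odd_double ltn_eqF ?ltn_half_double //=; case: new_edges2.
Qed.

Lemma col_new_pair : col L.*2 L.*2.+1 = 2.
Proof.
rewrite /col ltn_eqF // (minn_idPl (leqnSn _)) (maxn_idPr (leqnSn _)).
rewrite ltnNge (_ : 4 <= L.*2.+1) /=; last by lia.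
by rewrite /step_col (_ : L.*2.+1./2 = L) ?doubleK ?eqxx //; lia.
Qed.

Lemma col_sum_old v : v < L.*2 -> col_sum L.+1 v = col_sum L v + 4.
Proof.
move=> vL; rewrite /col_sum sum_nat_double_succ col_new_even // col_new_odd //.
by case: new_edges2; rewrite -addnA.
Qed.

Lemma col_sum_new_even : col_sum L.+1 L.*2 = 3 * L + 1.
Proof.
rewrite /col_sum sum_nat_double_succ col_diag col_new_pair.
rewrite (eq_big_nat _ _ (F2 := fun u => 1 + new_edges2 L u)); last first.
  by move=> u /andP[_ uL]; rewrite colC col_new_even //; case: new_edges2.
by rewrite big_split /= sum_nat_const_nat (sum_new_edges2 L_gt0); lia.
Qed.

Lemma col_sum_new_odd : col_sum L.+1 L.*2.+1 = 5 * L + 3.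
Proof.
rewrite /col_sum sum_nat_double_succ col_diag colC col_new_pair.
rewrite (eq_big_nat _ _ (F2 := fun u => 2 + ~~ new_edges2 L u)); last first.
  by move=> u /andP[_ uL]; rewrite colC col_new_odd //; case: new_edges2.
by rewrite big_split /= sum_nat_const_nat (sum_not_new_edges2 L_gt0); lia.
Qed.

Lemma col_count_old v i : v < L.*2 ->
  col_count L.+1 v i = col_count L v i
    + ((if new_edges2 L v then 2 else 1) == i) + ((if new_edges2 L v then 2 else 3) == i).
Proof. by move=> vL; rewrite /col_count sum_nat_double_succ col_new_even // col_new_odd. Qed.

Lemma col_count_new x i : 0 < i -> x \in [:: L.*2; L.*2.+1] ->
  col_count L.+1 x i = \sum_(0 <= u < L.*2) (col x u == i) + (2 == i).
Proof.
move=> /gtn_eqF i0; rewrite /col_count sum_nat_double_succ !inE.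
by case/orP=> /eqP ->;
  rewrite ?[col _.*2.+1 _]colC col_new_pair col_diag [0 == i]eq_sym i0 ?addn0.
Qed.

Lemma col_count2_new x : x \in [:: L.*2; L.*2.+1] -> col_count L.+1 x 2 = L.
Proof.
move=> x_new; rewrite col_count_new // -[RHS](prednK L_gt0) -(sum_new_edges2 L_gt0).
rewrite addn1; congr _.+1; apply: eq_big_nat => u /andP[_ uL].
by move: x_new; rewrite !inE => /orP[] /eqP ->;
  rewrite colC ?col_new_even ?col_new_odd //; case: new_edges2.
Qed.

Lemma col_count_new_le x i : 0 < i -> i != 2 -> x \in [:: L.*2; L.*2.+1] ->
  col_count L.+1 x i <= L.+1.
Proof.
move=> i0 i2 x_new; rewrite col_count_new // eq_sym (negbTE i2) addn0.
rewrite -(sum_not_new_edges2 L_gt0) big_nat_cond [leqRHS]big_nat_cond.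
apply: leq_sum => u /andP[/andP[_ uL] _].
by move: x_new; rewrite !inE => /orP[] /eqP ->;
  rewrite colC ?col_new_even ?col_new_odd //;
  case: new_edges2; rewrite ?leq_b1 // eq_sym (negbTE i2).
Qed.

End AddPair.

Lemma vertex_ind (P : nat -> nat -> Prop) :
  (forall v, v < 4 -> P 2 v) ->
  (forall L v, 1 < L -> v < L.*2 -> P L v -> P L.+1 v) ->
  (forall L x, 1 < L -> x \in [:: L.*2; L.*2.+1] -> P L.+1 x) ->
  forall L v, 1 < L -> v < L.*2 -> P L v.
Proof.
move=> base old new; elim=> [|L IHL] v // L_gt1 vL.
have [L1 | L_gt1'] := leqP L 1.
  have L_eq1 : L = 1 by lia.
  by rewrite L_eq1 in vL *; apply: base.
have : v < L.*2 \/ v \in [:: L.*2; L.*2.+1] by rewrite !inE; lia.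
by case=> [v_old | v_new]; [exact: old (IHL _ L_gt1' v_old) | exact: new].
Qed.

(* Vertex 3 is the only exception to the pattern, an artefact of the K_4 base. *)
Definition sum_value (L v : nat) : nat :=
  if v == 3 then 4 * L - 2 else if odd v then 4 * L + v./2 - 1 else 4 * L - v./2 - 3.

Lemma col_sum_value L v : 1 < L -> v < L.*2 -> col_sum L v = sum_value L v.
Proof.
move: L v; apply: (@vertex_ind (fun L v => col_sum L v = sum_value L v)).
- by move=> [|[|[|[|v]]]] //; rewrite /col_sum unlock.
- move=> L v L_gt1 vL IH; rewrite col_sum_old // IH /sum_value.
  by case: (v == 3); case: (odd v); lia.
- move=> L x L_gt1; rewrite !inE /sum_value => /orP[] /eqP ->.
  + by rewrite col_sum_new_even // odd_double doubleK ifN; lia.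
  + by rewrite col_sum_new_odd //= odd_double ifN; lia.
Qed.

Lemma sum_value_inj L u v :
  u < L.*2 -> v < L.*2 -> sum_value L u = sum_value L v -> u = v.
Proof.
rewrite /sum_value; case: (u =P 3) => [-> | u3]; case: (v =P 3) => [-> | v3] //=;
  by repeat case: ifP => ?; lia.
Qed.

Lemma new_edges2_odd L v : v < L.*2 -> new_edges2 L v -> odd (L - v./2).
Proof.
move=> vL; rewrite /new_edges2; case: eqP => [-> _ | //].
by have -> : L - L.-1 = 1 by lia.
Qed.

Lemma col_count2_le L v : 1 < L -> v < L.*2 -> col_count L v 2 + odd (L - v./2) <= L.
Proof.
move: L v; apply: (@vertex_ind (fun L v => col_count L v 2 + odd (L - v./2) <= L)).
- by move=> [|[|[|[|v]]]] //; rewrite /col_count unlock.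
- move=> L v L_gt1 vL IH; rewrite col_count_old //.
  case ne: (new_edges2 L v) => /=; last by lia.
  by move: (new_edges2_odd vL ne) IH; lia.
- move=> L x L_gt1 x_new; rewrite col_count2_new //.
  by move: x_new; rewrite !inE => /orP[] /eqP ->; lia.
Qed.

Lemma col_count_le L v i :
  1 < L -> v < L.*2 -> 0 < i -> i != 2 -> col_count L v i <= L.
Proof.
move=> + + i_gt0 i2; move: L v.
apply: (@vertex_ind (fun L v => col_count L v i <= L)).
- move=> [|[|[|[|v]]]] // _; rewrite /col_count unlock;
    by move: i_gt0 i2; case: i => [|[|[|[|i]]]].
- move=> L v L_gt1 vL IH; rewrite col_count_old //.
  by case: new_edges2; move: i_gt0 i2 IH; case: i => [|[|[|[|i]]]] //=; lia.
- by move=> L x L_gt1; apply: col_count_new_le.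
Qed.

Lemma card_odd_pair_index k : #|[set v : 'I_(2 * k) | odd (k - v./2)]| = 2 * uphalf k.
Proof.
rewrite -sum1dep_card big_mkcond /=.
rewrite (eq_bigr (fun v : 'I_(2 * k) => odd (k - v./2) : nat)); last by move=> v _; case: odd.
rewrite -(big_mkord xpredT (fun v => odd (k - v./2) : nat)) mul2n.
by rewrite (sum_nat_half (fun q => odd (k - q) : nat)) sum_odd_subn.
Qed.

Definition colK (k : nat) (u v : 'I_(2 * k)) : nat := col u v.

Lemma colK_edge_coloring3 k : edge_coloring3 (@colK k).
Proof. by move=> u v uv; split; [exact: colC | exact: col_range]. Qed.

Lemma sigma_colK k (v : 'I_(2 * k)) : sigma (@colK k) v = col_sum k v.
Proof.
rewrite /sigma /col_sum -mul2n big_mkord big_mkcond /=.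
by apply: eq_bigr => u _; case: eqP => [-> | _] //; rewrite /colK col_diag.
Qed.

Lemma col_deg_colK k (v : 'I_(2 * k)) i : 0 < i -> col_deg (@colK k) v i = col_count k v i.
Proof.
move=> /gtn_eqF i0; rewrite /col_deg /col_count -sum1dep_card -mul2n big_mkord big_mkcond /=.
apply: eq_bigr => u _; case: eqP => [-> | _] /=; first by rewrite /colK col_diag eq_sym i0.
by case: (_ == i).
Qed.

Theorem mainTheorem19 (k : nat) (hk : 2 <= k) :
  exists c : 'I_(2 * k) -> 'I_(2 * k) -> nat,
    [/\ edge_coloring3 c, quasi_majority c, nsd c &
        k.-1 <= #|[set v : 'I_(2 * k) | col_deg c v 2 <= k.-1]| ].
Proof.
have vk (v : 'I_(2 * k)) : v < k.*2 by rewrite -mul2n.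
exists (@colK k); split.
- exact: colK_edge_coloring3.
- move=> v i; have -> : uphalf (degK (2 * k)) = k by rewrite /degK; lia.
  have [-> | i_gt0] := posnP i; first by rewrite (col_deg0 _ (@colK_edge_coloring3 k)).
  rewrite col_deg_colK //; case: (i =P 2) => [-> | /eqP i2].
    by have := col_count2_le hk (vk v); lia.
  exact: col_count_le.
- move=> u v uv; rewrite !sigma_colK !col_sum_value //.
  by move=> /(sum_value_inj (vk u) (vk v)) /val_inj u_eq_v; rewrite u_eq_v eqxx in uv.
- have odd_sub : [set v : 'I_(2 * k) | odd (k - v./2)] \subset
                  [set v | col_deg (@colK k) v 2 <= k.-1].
    apply/subsetP => v; rewrite !inE col_deg_colK // => k_v_odd.
    by have := col_count2_le hk (vk v); rewrite k_v_odd; lia.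
  by apply: leq_trans (subset_leq_card odd_sub); rewrite card_odd_pair_index; lia.
Qed.
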